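(* Let $t\ge1$ and $n=t+1$. The gadget $\mathtt{SecBackSub}$ defined below is $t$-NIo secure with public output $\mathbf{x}$. $\mathtt{SecBackSub}$ takes as input a Boolean sharing $(\mathbf{A}_i)$ of a matrix $\mathbf{A}\in\mathbb{F}_q^{m\times m}$ and a Boolean sharing $(\mathbf{b}_i)$ of $\mathbf{b}\in\mathbb{F}_q^m$ and computes: for $j=m$ down to $2$: $\mathbf{x}[j]:=\mathtt{FullAdd}((\mathbf{b}[j]_i))$; for $k=1,\dots,j-1$: $\mathbf{b}[k]_i:=\mathbf{b}[k]_i+\mathbf{x}[j]\cdot\mathbf{A}[k,j]_i$ for every $i$. Then $\mathbf{x}[1]:=\mathtt{FullAdd}((\mathbf{b}[1]_i))$, and it returns the public vector $\mathbf{x}\in\mathbb{F}_q^m$.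
   Context: A Boolean sharing of $x\in\mathbb{F}_q$ is $(x_1,\dots,x_n)$ with $x=x_1+\cdots+x_n$; vectors and matrices are shared entry-wise; $\mathbf{v}[j]$ and $\mathbf{A}[k,j]$ denote entries. $\mathtt{StrongRefresh}((x_i))$: set $y_i:=x_i$; for $1\le i<j\le n$: sample $r$ uniformly from $\mathbb{F}_q$, set $y_i:=y_i+r$, $y_j:=y_j-r$; return $(y_i)$ (this gadget is free-$t$-SNI). $\mathtt{FullAdd}((y_i))$: $(a_i):=\mathtt{StrongRefresh}((y_i))$ and return $a_1+\cdots+a_n$. Probing model: an adversary may place probes on intermediate values (internal wires) of a gadget. A gadget with public output $b$ and some input sharings is $t$-NIo (non-interference with public outputs) secure if any set of at most $t_1\le t$ probes on its internal wires can be perfectly simulated using $t_1$ shares of each of its input sharings together with the value $b$. *)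

From HB Require Import structures.
From mathcomp Require Import all_boot all_order all_algebra.
Set Implicit Arguments. Unset Strict Implicit. Unset Printing Implicit Defensive.
Import Order.TTheory GRing.Theory Num.Theory.
Local Open Scope ring_scope.

Definition prob (R : finType) (E : pred R) : rat :=
  (#|[set r | E r]|%:R / #|R|%:R)%R.

Definition probe (F : finFieldType) (P : seq nat) (tr : seq F) : seq F :=
  [seq nth 0 tr p | p <- P].

(* t-NIo security (non-interference with public outputs) of a gadget with
   two input sharings (each with n shares, shares of types T1 and T2),
   internal randomness uniform on the finite type Rnd, list of internal
   wires [trace A b r] and public output [out A b r].

   For every set P of probes (distinct wire indices) with t1 := size P <= t,
   there are share index sets I1, I2 of size <= t1 and a (randomized, with
   uniform randomness on a finite type Rs) simulator S which only reads
   the shares of the inputs indexed by I1, resp. I2, together with the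
   public output, such that the joint distribution of (probed values,
   public output) equals the one obtained by sampling the public output
   from the real execution and the probed values from the simulator. *)
Definition t_NIo (F : finFieldType) (n : nat) (T1 T2 : Type) (Out : eqType)
  (Rnd : finType) (t : nat)
  (trace : ('I_n -> T1) -> ('I_n -> T2) -> Rnd -> seq F)
  (out : ('I_n -> T1) -> ('I_n -> T2) -> Rnd -> Out) : Prop :=
  forall P : seq nat,
    uniq P -> (size P <= t)%N ->
    (forall p, p \in P -> forall A b r, (p < size (trace A b r))%N) ->
    exists I1 I2 : {set 'I_n},
      [/\ (#|I1| <= size P)%N, (#|I2| <= size P)%N &
      exists (Rs : finType) (S : ('I_n -> T1) -> ('I_n -> T2) -> Out -> Rs -> seq F),
        (forall A A' b b' o s, (forall i, i \in I1 -> A i = A' i) ->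
            (forall i, i \in I2 -> b i = b' i) -> S A b o s = S A' b' o s) /\
        (forall A b (o : Out) (v : seq F),
            prob (fun r => (probe P (trace A b r) == v) && (out A b r == o))
            = prob (fun r => out A b r == o) * prob (fun s => S A b o s == v))].

Section Gadgets.
Variables (F : finFieldType) (n m : nat).

Definition upd (y : 'I_n -> F) (k : 'I_n) (v : F) : 'I_n -> F :=
  fun i => if i == k then v else y i.

Definition refresh_pairs : seq ('I_n * 'I_n) :=
  [seq (i, j) | i : 'I_n <- enum 'I_n, j : 'I_n <- [seq j : 'I_n <- enum 'I_n | (i < j)%N]].

Definition refresh_step (rnd : 'I_n * 'I_n -> F)
    (st : ('I_n -> F) * seq F) (ij : 'I_n * 'I_n) : ('I_n -> F) * seq F :=
  let: (y, tr) := st in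
  let r := rnd ij in
  let y1 := upd y ij.1 (y ij.1 + r) in
  let y2 := upd y1 ij.2 (y1 ij.2 - r) in
  (y2, tr ++ [:: r; y2 ij.1; y2 ij.2]).

Definition strong_refresh (rnd : 'I_n * 'I_n -> F) (y : 'I_n -> F)
    : ('I_n -> F) * seq F :=
  foldl (refresh_step rnd) (y, [seq y i | i <- enum 'I_n]) refresh_pairs.

Definition full_add (rnd : 'I_n * 'I_n -> F) (y : 'I_n -> F) : F * seq F :=
  let: (a, tr) := strong_refresh rnd y in
  (\sum_(i < n) a i,
   tr ++ [seq \sum_(i < n | (i <= k)%N) a i | k : 'I_n <- enum 'I_n]).

(* Randomness of SecBackSub: one StrongRefresh randomness per FullAdd call
   (the call computing x[j] uses rnd j; entries (i,j) with i >= j unused). *)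
Definition sbs_rnd := {ffun 'I_m -> {ffun 'I_n * 'I_n -> F}}.

(* state: current shares b[k]_i, computed x, wires so far *)
Definition sbs_state := (('I_m -> 'I_n -> F) * ('I_m -> F) * seq F)%type.

Definition sbs_upd (A : 'I_n -> 'M[F]_m) (j : 'I_m)
    (st : sbs_state) (ki : 'I_m * 'I_n) : sbs_state :=
  let: (bs, x, tr) := st in
  let: (k, i) := ki in
  let p := x j * A i k j in
  let v := bs k i + p in
  ((fun k' i' => if (k' == k) && (i' == i) then v else bs k' i'), x,
   tr ++ [:: p; v]).

(* iteration j (0-based, from m-1 down to 0):
   x[j] := FullAdd(b[j]); for k < j, for every i: update b[k]_i *)
Definition sbs_iter (A : 'I_n -> 'M[F]_m) (rnd : sbs_rnd)
    (st : sbs_state) (j : 'I_m) : sbs_state :=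
  let: (bs, x, tr) := st in
  let: (xj, trf) := full_add (rnd j) (bs j) in
  let x' := fun j' => if j' == j then xj else x j' in
  foldl (sbs_upd A j) (bs, x', tr ++ trf)
    [seq (k, i) | k <- [seq k : 'I_m <- enum 'I_m | (k < j)%N], i <- enum 'I_n].

Definition sbs_run (A : 'I_n -> 'M[F]_m) (b : 'I_n -> 'cV[F]_m)
    (rnd : sbs_rnd) : sbs_state :=
  let tr0 := flatten [seq [seq A i k j | k <- enum 'I_m, j <- enum 'I_m] | i <- enum 'I_n]
          ++ [seq b i k 0 | i <- enum 'I_n, k <- enum 'I_m] in
  foldl (sbs_iter A rnd) ((fun k i => b i k 0), (fun _ => 0), tr0)
        (rev (enum 'I_m)).

Definition sbs_trace A b rnd : seq F := (sbs_run A b rnd).2.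

Definition sbs_out A b rnd : 'cV[F]_m :=
  let: (_, x, _) := sbs_run A b rnd in \col_(j < m) x j.

End Gadgets.

(* Let I be the set of shares that the probed wires depend on; since |I| <= t < n,
   some share u lies outside I.  The simulator runs SecBackSub on the shares in I,
   zero shares elsewhere, and a share u of b chosen so that back substitution
   still returns the public output x; as x is a function of A and b alone, the
   probes are independent of it.  In every iteration the sharings entering
   FullAdd in the real and the simulated run differ by a vector d that vanishes
   on I and sums to 0.  Shifting the StrongRefresh randomness of the pairs
   (i, u) and (u, j) by the entries of d moves this difference onto share u,
   where it cancels, so the refreshed sharings coincide.  The shift is a
   bijection of the randomness under which every wire depending only on shares
   in I or on public values takes the same value in both runs. *)

From HB Require Import structures.
From mathcomp Require Import all_boot all_order all_algebra.
From mathcomp Require Import ring zify.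
From Stdlib Require Import FunctionalExtensionality.
Set Implicit Arguments. Unset Strict Implicit. Unset Printing Implicit Defensive.
Import Order.TTheory GRing.Theory Num.Theory.
Local Open Scope ring_scope.

Section UniformProbability.
Variable R : finType.

Lemma prob0 (E : pred R) : (forall r, ~~ E r) -> prob E = 0.
Proof.
move=> notE; rewrite /prob (_ : [set r | E r] = set0) ?cards0 ?mul0r //.
by apply/setP => r; rewrite !inE (negbTE (notE r)).
Qed.

Lemma prob_bij (f : R -> R) (E1 E2 : pred R) :
  bijective f -> (forall r, E1 r = E2 (f r)) -> prob E1 = prob E2.
Proof.
case=> g fK _ E12; rewrite /prob -(card_preimset [set r | E2 r] (can_inj fK)).
by congr (_%:R / _); apply: eq_card => r; rewrite !inE E12.
Qed.

Lemma prob_and_const (Out : eqType) (g : R -> Out) (c o : Out) (E : pred R) :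
  (forall r, g r = c) ->
  prob (fun r => E r && (g r == o)) = prob (fun r => g r == o) * prob E.
Proof.
move=> gc; case: (eqVneq c o) => [<- | co]; last first.
  have g_o r : g r != o by rewrite gc.
  rewrite (prob0 g_o) (@prob0 (fun r => E r && (g r == o))) ?mul0r // => r.
  by rewrite (negbTE (g_o r)) andbF.
rewrite /prob.
have -> : [set r | g r == c] = setT by apply/setP => r; rewrite !inE gc eqxx.
have -> : [set r | E r && (g r == c)] = [set r | E r].
  by apply/setP => r; rewrite !inE gc eqxx andbT.
rewrite cardsT; case: (posnP #|R|) => [-> | R_gt0]; first by rewrite invr0 !mulr0.
by rewrite divff ?mul1r // pnatr_eq0 -lt0n.
Qed.

End UniformProbability.

Lemma foldl_ind2 (T S1 S2 : Type) (f1 : S1 -> T -> S1) (f2 : S2 -> T -> S2)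
    (Inv : seq T -> S1 -> S2 -> Prop) (s : seq T) :
  (forall l x s' a1 a2, l ++ x :: s' = s -> Inv l a1 a2 ->
     Inv (rcons l x) (f1 a1 x) (f2 a2 x)) ->
  forall a1 a2, Inv [::] a1 a2 -> Inv s (foldl f1 a1 s) (foldl f2 a2 s).
Proof.
move=> step a1 a2 Inv0.
suff gen : forall s' l b1 b2, l ++ s' = s -> Inv l b1 b2 ->
    Inv s (foldl f1 b1 s') (foldl f2 b2 s') by exact: gen s [::] a1 a2 erefl Inv0.
elim=> [|x s' IHs] l b1 b2 def_s Inv_l /=; first by rewrite -def_s cats0.
by apply: (IHs (rcons l x)); [rewrite cat_rcons | exact: step def_s Inv_l].
Qed.

Lemma foldl_ind (T S : Type) (f : S -> T -> S) (Inv : seq T -> S -> Prop) (s : seq T) :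
  (forall l x s' a, l ++ x :: s' = s -> Inv l a -> Inv (rcons l x) (f a x)) ->
  forall a, Inv [::] a -> Inv s (foldl f a s).
Proof.
move=> step a Inv0.
apply: (@foldl_ind2 _ _ _ f (fun _ _ => tt) (fun l a _ => Inv l a) s _ a tt Inv0).
by move=> l x s' b _; exact: step.
Qed.

Section LabelledAgreement.
Variables (F : finFieldType) (n : nat) (I : {set 'I_n}).

(* A wire labelled [Some i] may depend on share [i] of the inputs, a wire
   labelled [None] only on public values. *)
Definition covered (l : option 'I_n) : bool := if l is Some i then i \in I else true.

Definition agree (w : seq (option 'I_n)) (s1 s2 : seq F) : Prop :=
  [/\ size s1 = size w, size s2 = size w &
      forall p, covered (nth None w p) -> nth 0 s1 p = nth 0 s2 p].

Lemma agree_nil : agree [::] [::] [::].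
Proof. by split => // p; rewrite !nth_nil. Qed.

Lemma agree_cat w1 w2 s1 s2 t1 t2 :
  agree w1 s1 s2 -> agree w2 t1 t2 -> agree (w1 ++ w2) (s1 ++ t1) (s2 ++ t2).
Proof.
case=> s1w s2w s12 [t1w t2w t12].
split; rewrite ?size_cat ?s1w ?s2w ?t1w ?t2w // => p.
by rewrite !nth_cat s1w s2w; case: ifP => _; [exact: s12 | exact: t12].
Qed.

Lemma agree_cons l w x1 x2 s1 s2 :
  (covered l -> x1 = x2) -> agree w s1 s2 -> agree (l :: w) (x1 :: s1) (x2 :: s2).
Proof.
move=> x12 [s1w s2w s12]; split => /=; rewrite ?s1w ?s2w //.
by case=> [|p] /=; [exact: x12 | exact: s12].
Qed.

Lemma agree_map (T : Type) (lab : T -> option 'I_n) (f1 f2 : T -> F) (s : seq T) :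
  (forall y, covered (lab y) -> f1 y = f2 y) ->
  agree (map lab s) (map f1 s) (map f2 s).
Proof.
move=> f12; elim: s => [|y s IHs] /=; first exact: agree_nil.
exact: agree_cons (f12 y) IHs.
Qed.

Lemma agree_flatten (T : Type) (lab : T -> seq (option 'I_n)) (g1 g2 : T -> seq F)
    (s : seq T) :
  (forall y, agree (lab y) (g1 y) (g2 y)) ->
  agree (flatten (map lab s)) (flatten (map g1 s)) (flatten (map g2 s)).
Proof.
move=> g12; elim: s => [|y s IHs] /=; first exact: agree_nil.
exact: agree_cat.
Qed.

Lemma probe_agree (P : seq nat) w s1 s2 :
  agree w s1 s2 -> {in P, forall p, covered (nth None w p)} -> probe P s1 = probe P s2.
Proof. by case=> _ _ s12 Pw; apply/eq_in_map => p /Pw /s12. Qed.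

End LabelledAgreement.

Definition probed_shares n (w : seq (option 'I_n)) (P : seq nat) : {set 'I_n} :=
  [set i | Some i \in [seq nth None w p | p <- P]].

Lemma card_probed_shares n (w : seq (option 'I_n)) P :
  (#|probed_shares w P| <= size P)%N.
Proof.
have -> : #|probed_shares w P| = #|pmap id [seq nth None w p | p <- P]|.
  by apply: eq_card => i; rewrite inE mem_pmap map_id.
apply: leq_trans (card_size _) _.
by rewrite size_pmap (leq_trans (count_size _ _)) ?size_map.
Qed.

Lemma probed_shares_covered n (w : seq (option 'I_n)) P :
  {in P, forall p, covered (probed_shares w P) (nth None w p)}.
Proof.
move=> p pP; case def_l: (nth None w p) => [i|] //=.
by rewrite inE -def_l map_f.
Qed.

Lemma sum_if_eq (T : finType) (V : zmodType) (P : pred T) (c : T) (X : T -> V) :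
  \sum_(i | P i) (if i == c then X i else 0) = if P c then X c else 0.
Proof.
rewrite -big_mkcondr; case: ifP => Pc.
  by rewrite (big_pred1 c) // => i /=; case: (eqVneq i c) => [->|]; rewrite ?andbT ?andbF.
by rewrite big_pred0 // => i /=; case: (eqVneq i c) => [->|]; rewrite ?andbT ?andbF.
Qed.

Section StrongRefresh.
Variables (F : finFieldType) (n : nat).

Lemma big_refresh_pairs (G : 'I_n * 'I_n -> F) :
  \sum_(p <- refresh_pairs n) G p = \sum_(i < n) \sum_(j < n | (i < j)%N) G (i, j).
Proof.
rewrite big_allpairs_dep /= big_enum; apply: eq_bigr => i _.
by rewrite big_filter big_enum_cond.
Qed.

Lemma refresh_stepE (rnd : 'I_n * 'I_n -> F) (y : 'I_n -> F) tr (p : 'I_n * 'I_n) :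
  let y' := upd (upd y p.1 (y p.1 + rnd p)) p.2 (upd y p.1 (y p.1 + rnd p) p.2 - rnd p) in
  refresh_step rnd (y, tr) p = (y', tr ++ [:: rnd p; y' p.1; y' p.2]).
Proof. by case: p. Qed.

Lemma refresh_step_trace (rnd : 'I_n * 'I_n -> F) (y : 'I_n -> F) tr p :
  (refresh_step rnd (y, tr) p).2
  = tr ++ [:: rnd p; (refresh_step rnd (y, tr) p).1 p.1; (refresh_step rnd (y, tr) p).1 p.2].
Proof. by case: p. Qed.

Lemma refresh_step_shift (rnd1 rnd2 : 'I_n * 'I_n -> F) (y1 y2 D : 'I_n -> F) tr1 tr2
    (p : 'I_n * 'I_n) c w :
  (forall k, y2 k = y1 k + D k) -> rnd2 p = rnd1 p + c ->
  (refresh_step rnd2 (y2, tr2) p).1 w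
  = (refresh_step rnd1 (y1, tr1) p).1 w + D w
    + ((if p.1 == w then c else 0) - (if p.2 == w then c else 0)).
Proof.
move=> y12 rnd12; rewrite !refresh_stepE /upd /= !y12 rnd12 [p.1 == w]eq_sym [p.2 == w]eq_sym.
case: (eqVneq w p.2) => [->|w2]; case: (eqVneq p.2 p.1) => [e|n12];
  rewrite ?e ?eqxx ?(negbTE n12) //=; try case: (eqVneq w p.1) => [->|w1];
  rewrite ?eqxx //=; ring.
Qed.

Lemma sum_upd (y : 'I_n -> F) c v : \sum_k upd y c v k = \sum_k y k - y c + v.
Proof.
rewrite (bigD1 c) //= [in RHS](bigD1 c) //= /upd eqxx.
rewrite (eq_bigr y) => [|k /negbTE -> //]; ring.
Qed.

Lemma sum_refresh_step rnd (y : 'I_n -> F) tr p :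
  \sum_k (refresh_step rnd (y, tr) p).1 k = \sum_k y k.
Proof. by rewrite refresh_stepE /= !sum_upd; ring. Qed.

Lemma sum_strong_refresh rnd (y : 'I_n -> F) :
  \sum_k (strong_refresh rnd y).1 k = \sum_k y k.
Proof.
suff gen s st : \sum_k (foldl (refresh_step rnd) st s).1 k = \sum_k st.1 k by exact: gen.
elim: s st => // p s IHs [z tr].
exact: etrans (IHs (refresh_step rnd (z, tr) p)) (sum_refresh_step rnd z tr p).
Qed.

Lemma full_add_sum rnd (y : 'I_n -> F) : (full_add rnd y).1 = \sum_i y i.
Proof.
by rewrite /full_add -(sum_strong_refresh rnd); case: strong_refresh.
Qed.

End StrongRefresh.

Definition refresh_labels n : seq (option 'I_n) :=
  [seq Some i | i <- enum 'I_n]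
  ++ flatten [seq [:: Some p.1; Some p.1; Some p.2] | p <- refresh_pairs n].

Definition full_add_labels n : seq (option 'I_n) :=
  refresh_labels n ++ [seq None | _ <- enum 'I_n].

Section RefreshCoupling.
Variables (F : finFieldType) (n : nat) (I : {set 'I_n}) (u : 'I_n) (d : 'I_n -> F).

(* Shifting the randomness of the pairs (i, u) and (u, j) carries the share
   difference [d] onto share [u]. *)
Definition refresh_shift (p : 'I_n * 'I_n) : F :=
  if p.2 == u then - d p.1 else if p.1 == u then d p.2 else 0.

(* The difference of two coupled StrongRefresh states after the pairs [l]. *)
Definition refresh_drift (l : seq ('I_n * 'I_n)) (w : 'I_n) : F :=
  d w + \sum_(p <- l) ((if p.1 == w then refresh_shift p else 0)
                       - (if p.2 == w then refresh_shift p else 0)).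

Lemma refresh_drift_rcons l p w :
  refresh_drift (rcons l p) w = refresh_drift l w
    + ((if p.1 == w then refresh_shift p else 0) - (if p.2 == w then refresh_shift p else 0)).
Proof. by rewrite /refresh_drift big_rcons addrA. Qed.

Lemma sum_refresh_drift l : \sum_w d w = 0 -> \sum_w refresh_drift l w = 0.
Proof.
move=> d_sum; rewrite big_split /= d_sum add0r exchange_big /= big1_seq // => p _.
have sum_at c : \sum_w (if c == w then refresh_shift p else 0) = refresh_shift p.
  by under eq_bigr do rewrite eq_sym; rewrite sum_if_eq.
by rewrite sumrB !sum_at subrr.
Qed.

Lemma refresh_drift_pairs_neq w : w != u -> refresh_drift (refresh_pairs n) w = 0.
Proof.
move=> /negbTE wu; rewrite /refresh_drift big_refresh_pairs.
under eq_bigr do rewrite sumrB.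
rewrite sumrB.
have -> : \sum_(i < n) \sum_(j < n | (i < j)%N)
              (if (i, j).1 == w then refresh_shift (i, j) else 0)
          = if (w < u)%N then - d w else 0.
  rewrite (eq_bigr (fun i =>
    if i == w then \sum_(j < n | (w < j)%N) refresh_shift (w, j) else 0)); last first.
    by move=> i _ /=; case: (eqVneq i w) => [-> | _] //; rewrite big1_eq.
  rewrite sum_if_eq /=.
  under eq_bigr do rewrite /refresh_shift /= wu.
  by rewrite sum_if_eq.
have -> : \sum_(i < n) \sum_(j < n | (i < j)%N)
              (if (i, j).2 == w then refresh_shift (i, j) else 0)
          = if (u < w)%N then d w else 0.
  under eq_bigr do rewrite sum_if_eq.
  rewrite -big_mkcond /=.
  under eq_bigr do rewrite /refresh_shift /= wu.
  by rewrite sum_if_eq.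
case: ltngtP => [||/val_inj/eqP]; rewrite ?wu //.
- by rewrite subr0 addrN.
- by rewrite sub0r addrN.
Qed.

Lemma refresh_drift_pairs w : \sum_w d w = 0 -> refresh_drift (refresh_pairs n) w = 0.
Proof.
move=> d_sum; case: (eqVneq w u) => [-> | /refresh_drift_pairs_neq //].
have := sum_refresh_drift (refresh_pairs n) d_sum.
by rewrite (bigD1 u) //= big1 ?addr0 // => v /refresh_drift_pairs_neq.
Qed.

Hypotheses (uI : u \notin I) (d_I : forall w, w \in I -> d w = 0).

Lemma refresh_shift_I p w : w \in I -> (p.1 == w) || (p.2 == w) -> refresh_shift p = 0.
Proof.
move=> wI; have /negbTE wu : w != u by apply: contraNneq uI => <-.
by rewrite /refresh_shift; case/orP=> /eqP ->; rewrite wu ?d_I ?oppr0 //; case: ifP.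
Qed.

Lemma refresh_drift_I l w : w \in I -> refresh_drift l w = 0.
Proof.
move=> wI; rewrite /refresh_drift d_I // add0r big1_seq // => p _.
case: (boolP ((p.1 == w) || (p.2 == w))) => [pw | /norP[/negbTE -> /negbTE ->]].
  by rewrite (refresh_shift_I wI pw) !if_same subrr.
exact: subrr.
Qed.

Lemma strong_refresh_coupled rnd1 rnd2 (y1 y2 : 'I_n -> F) :
  (forall w, y2 w = y1 w + d w) -> (forall p, rnd2 p = rnd1 p + refresh_shift p) ->
  \sum_w d w = 0 ->
  (strong_refresh rnd2 y2).1 =1 (strong_refresh rnd1 y1).1 /\
  agree I (refresh_labels n) (strong_refresh rnd1 y1).2 (strong_refresh rnd2 y2).2.
Proof.
move=> y12 rnd12 d_sum.
pose Inv l (s1 s2 : ('I_n -> F) * seq F) :=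
  (forall w, s2.1 w = s1.1 w + refresh_drift l w) /\
  agree I ([seq Some i | i <- enum 'I_n]
           ++ flatten [seq [:: Some p.1; Some p.1; Some p.2] | p <- l]) s1.2 s2.2.
suff [drift12 trace12] : Inv (refresh_pairs n) (strong_refresh rnd1 y1) (strong_refresh rnd2 y2).
  by split=> // w; rewrite drift12 refresh_drift_pairs ?addr0.
apply: foldl_ind2 => [l p _ [z1 tr1] [z2 tr2] _ [z12 tr12] | ]; last first.
  split=> [w | /=]; first by rewrite /= y12 /refresh_drift big_nil addr0.
  by rewrite cats0; apply: agree_map => i /= iI; rewrite y12 d_I ?addr0.
rewrite /= in z12 tr12.
have z12' w : (refresh_step rnd2 (z2, tr2) p).1 w
              = (refresh_step rnd1 (z1, tr1) p).1 w + refresh_drift (rcons l p) w.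
  by rewrite (refresh_step_shift tr1 tr2 w z12 (rnd12 p)) refresh_drift_rcons !addrA.
split=> //; rewrite !refresh_step_trace map_rcons flatten_rcons catA.
apply: agree_cat => //.
apply: agree_cons => [p1I | ]; first by rewrite rnd12 (refresh_shift_I p1I) ?eqxx ?addr0.
apply: agree_cons => [p1I | ]; first by rewrite z12' refresh_drift_I ?addr0.
apply: agree_cons => [p2I | ]; first by rewrite z12' refresh_drift_I ?addr0.
exact: agree_nil.
Qed.

Lemma full_add_coupled rnd1 rnd2 (y1 y2 : 'I_n -> F) :
  (forall w, y2 w = y1 w + d w) -> (forall p, rnd2 p = rnd1 p + refresh_shift p) ->
  \sum_w d w = 0 ->
  (full_add rnd2 y2).1 = (full_add rnd1 y1).1 /\
  agree I (full_add_labels n) (full_add rnd1 y1).2 (full_add rnd2 y2).2.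
Proof.
move=> y12 rnd12 d_sum; have [a12 trace12] := strong_refresh_coupled y12 rnd12 d_sum.
rewrite /full_add; move: a12 trace12.
case: (strong_refresh rnd1 y1) => a1 tr1; case: (strong_refresh rnd2 y2) => a2 tr2 /= a12 tr12.
split; first exact: eq_bigr.
by apply: agree_cat => //; apply: agree_map => k _; apply: eq_bigr.
Qed.

End RefreshCoupling.

Lemma sum_mem_rcons (T : finType) (V : zmodType) (l : seq T) j (P : pred T) (G : T -> V) :
  j \notin l ->
  \sum_(t | (t \in rcons l j) && P t) G t
  = \sum_(t | (t \in l) && P t) G t + (if P j then G j else 0).
Proof.
move=> jl; under eq_bigl do rewrite mem_rcons in_cons.
case: ifP => Pj.
  rewrite (bigD1 j) /= ?eqxx ?Pj // addrC; congr (_ + _); apply: eq_bigl => t.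
  by case: (eqVneq t j) => [-> | ] /=; rewrite ?(negbTE jl) ?andbF ?andbT.
rewrite addr0; apply: eq_bigl => t.
by case: (eqVneq t j) => [-> | ] //=; rewrite Pj (negbTE jl).
Qed.

Lemma mem_rev_enum_prefix m (l s : seq 'I_m) j :
  l ++ j :: s = rev (enum 'I_m) -> forall j', (j' \in l) = (j < j')%N.
Proof.
move=> def_l j'.
have lt_trans : transitive (fun a b : 'I_m => (a < b)%N) by move=> ? ? ?; apply: ltn_trans.
have gt_trans : transitive (fun a b : 'I_m => (b < a)%N).
  by move=> ? ? ? /[swap]; apply: ltn_trans.
have sorted_enum : sorted (fun a b : 'I_m => (a < b)%N) (enum 'I_m).
  by have := iota_ltn_sorted 0 m; rewrite -val_enum_ord sorted_map.
have : sorted (fun a b : 'I_m => (b < a)%N) (l ++ j :: s) by rewrite def_l rev_sorted.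
rewrite sorted_cat_cons (path_sortedE gt_trans) => /andP[_ /andP[/allP s_lt_j _]].
have : sorted (fun a b : 'I_m => (a < b)%N) (rev s ++ j :: rev l).
  by rewrite -rev_rcons -cats1 -rev_cat -catA /= def_l revK.
rewrite sorted_cat_cons (path_sortedE lt_trans) => /andP[_ /andP[/allP j_lt_l _]].
apply/idP/idP => [j'l | jj']; first by apply: j_lt_l; rewrite mem_rev.
have : j' \in l ++ j :: s by rewrite def_l mem_rev mem_enum.
rewrite mem_cat inE => /or3P[// | /eqP eq_j' | /s_lt_j /= j'j].
  by rewrite eq_j' ltnn in jj'.
by have := ltn_trans j'j jj'; rewrite ltnn.
Qed.

Section BackSubstitution.
Variables (F : finFieldType) (n m : nat).
Implicit Types (A : 'I_n -> 'M[F]_m) (b : 'I_n -> 'cV[F]_m) (x : 'I_m -> F).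

(* Share [i] of [b[j]] at the moment [x[j]] is computed. *)
Definition back_sub_row A b x (j : 'I_m) (i : 'I_n) : F :=
  b i j 0 + \sum_(j' < m | (j < j')%N) x j' * A i j j'.

Definition back_sub_solution A b x : Prop := forall j, x j = \sum_i back_sub_row A b x j i.

Lemma back_sub_solution_exists A b : exists x, back_sub_solution A b x.
Proof.
pose step x j := \sum_i back_sub_row A b x j i.
have stable k (j : 'I_m) :
    (m - k <= j)%N -> iter k.+1 step (fun=> 0) j = iter k step (fun=> 0) j.
  elim: k j => [|k IHk] j jk /=; first by rewrite subn0 leqNgt ltn_ord in jk.
  apply: eq_bigr => i _; congr (_ + _); apply: eq_bigr => j' jj'.
  by congr (_ * _); apply: IHk; lia.
exists (iter m step (fun=> 0)) => j.
by rewrite -[LHS]stable ?subnn.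
Qed.

Definition update_pairs (j : 'I_m) : seq ('I_m * 'I_n) :=
  [seq (k, i) | k <- [seq k : 'I_m <- enum 'I_m | (k < j)%N], i <- enum 'I_n].

Lemma sum_update_pairs j k i (X : F) :
  \sum_(p <- update_pairs j | p == (k, i)) X = if (k < j)%N then X else 0.
Proof.
rewrite big_mkcond big_allpairs_dep /= big_filter big_enum_cond /=.
rewrite (eq_bigr (fun k' => if k' == k then X else 0)) ?sum_if_eq // => k' _.
rewrite big_enum /=; case: (eqVneq k' k) => [-> | kk'].
  by rewrite (eq_bigr (fun i' => if i' == i then X else 0)) ?sum_if_eq // => i' _;
     rewrite xpair_eqE eqxx.
by rewrite big1 // => i' _; rewrite xpair_eqE (negbTE kk').
Qed.

Lemma sbs_iterE A r bs x tr j :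
  sbs_iter A r (bs, x, tr) j =
  foldl (sbs_upd A j)
    (bs, fun j' => if j' == j then (full_add (r j) (bs j)).1 else x j',
     tr ++ (full_add (r j) (bs j)).2) (update_pairs j).
Proof. by rewrite /sbs_iter; case: full_add. Qed.

Lemma foldl_sbs_upd A j L (st : sbs_state F n m) :
  (foldl (sbs_upd A j) st L).1.2 = st.1.2 /\
  forall k i, (foldl (sbs_upd A j) st L).1.1 k i
              = st.1.1 k i + \sum_(p <- L | p == (k, i)) st.1.2 j * A i k j.
Proof.
elim: L st => [|[k' i'] L IHL] [[bs x] tr] /=; first by split=> // k i; rewrite big_nil addr0.
have [-> shares] := IHL (sbs_upd A j (bs, x, tr) (k', i')).
split=> // k i; rewrite shares big_cons xpair_eqE [k' == k]eq_sym [i' == i]eq_sym /=.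
by case: (eqVneq k k') => [-> | ]; case: (eqVneq i i') => [-> | ] //=; rewrite addrA.
Qed.

Definition sbs_invariant A b x (l : seq 'I_m) (st : sbs_state F n m) : Prop :=
  (forall k i,
     st.1.1 k i = b i k 0 + \sum_(j' < m | (j' \in l) && (k < j')%N) x j' * A i k j')
  /\ forall j, st.1.2 j = if j \in l then x j else 0.

Lemma sbs_invariant_row A b x l j s st :
  l ++ j :: s = rev (enum 'I_m) -> sbs_invariant A b x l st ->
  st.1.1 j =1 back_sub_row A b x j.
Proof.
move=> /mem_rev_enum_prefix prefix [shares _] i; rewrite shares.
by congr (_ + _); apply: eq_bigl => j'; rewrite prefix andbb.
Qed.

Lemma sbs_iter_invariant A b x r l j s st :
  back_sub_solution A b x -> l ++ j :: s = rev (enum 'I_m) ->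
  sbs_invariant A b x l st -> sbs_invariant A b x (rcons l j) (sbs_iter A r st j).
Proof.
move=> sol prefix inv; have row := sbs_invariant_row prefix inv.
have jl : j \notin l by rewrite (mem_rev_enum_prefix prefix) ltnn.
case: st inv row => [[bs x0] tr] [shares xs] row; rewrite /= in shares xs row.
have xj : (full_add (r j) (bs j)).1 = x j.
  by rewrite full_add_sum (eq_bigr _ (fun i _ => row i)) -sol.
rewrite sbs_iterE xj; have [x_upd shares_upd] := foldl_sbs_upd A j (update_pairs j)
  (bs, fun j' => if j' == j then x j else x0 j', tr ++ (full_add (r j) (bs j)).2).
split=> [k i | j'].
  by rewrite shares_upd sum_update_pairs /= shares sum_mem_rcons // eqxx addrA.
by rewrite x_upd /= xs mem_rcons in_cons; case: (eqVneq j' j) => [-> | ].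
Qed.

Lemma sbs_invariant_init A b x tr :
  sbs_invariant A b x [::] (fun k i => b i k 0, fun=> 0, tr).
Proof. by split=> [k i | j] /=; rewrite ?big_pred0 ?addr0. Qed.

Lemma sbs_run_invariant A b x r :
  back_sub_solution A b x -> sbs_invariant A b x (rev (enum 'I_m)) (sbs_run A b r).
Proof.
move=> sol; apply: (foldl_ind (Inv := sbs_invariant A b x)) => [l j s st prefix | ].
  exact: sbs_iter_invariant sol prefix.
exact: sbs_invariant_init.
Qed.

Lemma sbs_out_solution A b x r : back_sub_solution A b x -> sbs_out A b r = \col_j x j.
Proof.
move=> /(sbs_run_invariant r) [_]; rewrite /sbs_out; case: sbs_run => [[bs x'] tr] /= xs.
by apply/matrixP => j k; rewrite !mxE xs mem_rev mem_enum.
Qed.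

End BackSubstitution.

Section SecBackSubLabels.
Variables (n m : nat).

Definition input_labels : seq (option 'I_n) :=
  flatten [seq [seq Some i | k <- enum 'I_m, j <- enum 'I_m] | i <- enum 'I_n]
  ++ [seq Some i | i <- enum 'I_n, k <- enum 'I_m].

Definition iter_labels (j : 'I_m) : seq (option 'I_n) :=
  full_add_labels n ++ flatten [seq [:: Some p.2; Some p.2] | p <- update_pairs n j].

Definition sbs_labels : seq (option 'I_n) :=
  input_labels ++ flatten [seq iter_labels j | j <- rev (enum 'I_m)].

End SecBackSubLabels.

Section SecBackSubCoupling.
Variables (F : finFieldType) (n m : nat) (I : {set 'I_n}) (u : 'I_n).
Variables (A A' : 'I_n -> 'M[F]_m) (b b' : 'I_n -> 'cV[F]_m) (x : 'I_m -> F).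
Hypotheses (uI : u \notin I)
  (A_I : forall i, i \in I -> A' i = A i) (b_I : forall i, i \in I -> b' i = b i).
Hypotheses (sol : back_sub_solution A b x) (sol' : back_sub_solution A' b' x).

Definition row_diff (j : 'I_m) (i : 'I_n) : F :=
  back_sub_row A' b' x j i - back_sub_row A b x j i.

Definition coupled_rnd (r : sbs_rnd F n m) : sbs_rnd F n m :=
  [ffun j => [ffun p => r j p + refresh_shift u (row_diff j) p]].

Lemma coupled_rnd_bij : bijective coupled_rnd.
Proof.
exists (fun r : sbs_rnd F n m =>
          [ffun j => [ffun p => r j p - refresh_shift u (row_diff j) p]]) => r;
  by apply/ffunP => j; apply/ffunP => p; rewrite !ffunE ?addrK ?subrK.
Qed.

Lemma foldl_sbs_upd_agree j L (st1 st2 : sbs_state F n m) w :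
  (forall k i, i \in I -> st1.1.1 k i = st2.1.1 k i) -> st1.1.2 j = st2.1.2 j ->
  agree I w st1.2 st2.2 ->
  agree I (w ++ flatten [seq [:: Some p.2; Some p.2] | p <- L])
    (foldl (sbs_upd A j) st1 L).2 (foldl (sbs_upd A' j) st2 L).2.
Proof.
elim: L st1 st2 w => [|[k i] L IHL] [[bs1 x1] tr1] [[bs2 x2] tr2] w /= bs12 x12 tr12.
  by rewrite cats0.
rewrite (catA w [:: Some i; Some i]); apply: IHL => /= [k' i' i'I | // | ].
  by case: ifP => [/andP[_ /eqP <-] | _]; rewrite bs12 // x12 A_I.
apply: agree_cat => //; apply: agree_cons => [iI | ]; first by rewrite x12 A_I.
by apply: agree_cons => [iI | ]; [rewrite bs12 // x12 A_I | exact: agree_nil].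
Qed.

Lemma sbs_iter_agree r l j s st1 st2 w :
  l ++ j :: s = rev (enum 'I_m) ->
  sbs_invariant A b x l st1 -> sbs_invariant A' b' x l st2 -> agree I w st1.2 st2.2 ->
  agree I (w ++ iter_labels n j)
    (sbs_iter A r st1 j).2 (sbs_iter A' (coupled_rnd r) st2 j).2.
Proof.
move=> prefix inv1 inv2.
have row1 := sbs_invariant_row prefix inv1; have row2 := sbs_invariant_row prefix inv2.
case: st1 st2 inv1 inv2 row1 row2 => [[bs1 x1] tr1] [[bs2 x2] tr2] [shares1 _] [shares2 _].
move=> row1 row2 tr12; rewrite /= in shares1 shares2 row1 row2 tr12.
have diff_I i : i \in I -> row_diff j i = 0.
  by move=> iI; rewrite /row_diff /back_sub_row A_I // b_I // subrr.
have diff_sum : \sum_i row_diff j i = 0 by rewrite sumrB -sol -sol' subrr.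
have y12 i : bs2 j i = bs1 j i + row_diff j i by rewrite row1 row2 /row_diff addrC subrK.
have rnd12 p : coupled_rnd r j p = r j p + refresh_shift u (row_diff j) p by rewrite !ffunE.
have [fa12 fa_tr12] := full_add_coupled uI diff_I y12 rnd12 diff_sum.
rewrite !sbs_iterE /iter_labels catA; apply: foldl_sbs_upd_agree => /=.
- by move=> k i iI; rewrite shares1 shares2 A_I // b_I.
- by rewrite !eqxx fa12.
- exact: agree_cat.
Qed.

Lemma sbs_trace_coupled r :
  agree I (sbs_labels n m) (sbs_trace A b r) (sbs_trace A' b' (coupled_rnd r)).
Proof.
pose Inv l s1 s2 := [/\ sbs_invariant A b x l s1, sbs_invariant A' b' x l s2 &
  agree I (input_labels n m ++ flatten [seq iter_labels n j | j <- l]) s1.2 s2.2].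
suff [_ _ //] : Inv (rev (enum 'I_m)) (sbs_run A b r) (sbs_run A' b' (coupled_rnd r)).
apply: (foldl_ind2 (Inv := Inv)) => [l j s st1 st2 prefix [inv1 inv2 tr12] | ].
  split; [exact: sbs_iter_invariant sol prefix inv1 |
          exact: sbs_iter_invariant sol' prefix inv2 |].
  by rewrite map_rcons flatten_rcons catA; exact: sbs_iter_agree prefix inv1 inv2 tr12.
split; [exact: sbs_invariant_init | exact: sbs_invariant_init |].
rewrite cats0 /input_labels; apply: agree_cat.
  apply: agree_flatten => i; apply: agree_flatten => k; apply: agree_map => j' /= iI.
  by rewrite A_I.
by apply: agree_flatten => i; apply: agree_map => k /= iI; rewrite b_I.
Qed.

End SecBackSubCoupling.

Section Simulator.
Variables (F : finFieldType) (n m : nat) (I : {set 'I_n}) (u : 'I_n).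
Implicit Types (A : 'I_n -> 'M[F]_m) (b : 'I_n -> 'cV[F]_m) (o : 'cV[F]_m).

Definition sim_A A : 'I_n -> 'M[F]_m := fun i => if i \in I then A i else 0.

(* Share [u] of [b] is chosen so that back substitution on the simulated
   inputs yields the public output [o]. *)
Definition sim_b A b o : 'I_n -> 'cV[F]_m := fun i =>
  if i \in I then b i
  else if i == u then
    \col_k (o k 0 - \sum_(i' in I) b i' k 0
            - \sum_(j' < m | (k < j')%N) o j' 0 * \sum_i' sim_A A i' k j')
  else 0.

Definition sbs_sim (P : seq nat) A b o (s : sbs_rnd F n m) : seq F :=
  probe P (sbs_trace (sim_A A) (sim_b A b o) s).

Lemma sbs_sim_local P A A2 b b2 o s :
  (forall i, i \in I -> A i = A2 i) -> (forall i, i \in I -> b i = b2 i) ->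
  sbs_sim P A b o s = sbs_sim P A2 b2 o s.
Proof.
move=> A_I b_I.
have eA : sim_A A = sim_A A2.
  by apply: functional_extensionality => i; rewrite /sim_A; case: ifP => // /A_I ->.
have eb : sim_b A b o = sim_b A2 b2 o.
  apply: functional_extensionality => i; rewrite /sim_b eA; case: ifP => [/b_I // | _].
  case: eqP => // _; apply/matrixP => k l.
  by rewrite !mxE (eq_bigr (fun i' => b2 i' k 0)) // => i' /b_I ->.
by rewrite /sbs_sim eA eb.
Qed.

Hypothesis uI : u \notin I.

Lemma sim_back_sub_solution A b o x :
  (forall j, o j 0 = x j) -> back_sub_solution (sim_A A) (sim_b A b o) x.
Proof.
move=> ox j.
have sim_b_entry i : sim_b A b o i j 0 =
    if i \in I then b i j 0
    else if i == u then
      o j 0 - \sum_(i' in I) b i' j 0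
      - \sum_(j' < m | (j < j')%N) o j' 0 * \sum_i' sim_A A i' j j'
    else 0.
  by rewrite /sim_b; case: ifP => // _; case: ifP => _; rewrite !mxE.
rewrite /back_sub_row big_split /=; under eq_bigr do rewrite sim_b_entry.
rewrite (bigID (mem I)) /= [X in _ + X + _](eq_bigr _ (fun i => ifN _ _)) sum_if_eq uI.
rewrite [X in X + _ + _](eq_bigr _ (fun i => ifT _ _)) exchange_big /=.
under [X in _ + _ + X]eq_bigr do rewrite -mulr_sumr -ox.
by rewrite -ox; ring.
Qed.

End Simulator.

Theorem lemma6 (F : finFieldType) (t m : nat) :
  (1 <= t)%N ->
  @t_NIo F t.+1 'M[F]_m 'cV[F]_m 'cV[F]_m (sbs_rnd F t.+1 m) t
    (@sbs_trace F t.+1 m) (@sbs_out F t.+1 m).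
Proof.
move=> _ P _ size_P _.
pose I := probed_shares (sbs_labels t.+1 m) P.
have card_I : (#|I| <= size P)%N := card_probed_shares _ P.
have /card_gt0P [u] : (0 < #|~: I|)%N by have := cardsC I; rewrite card_ord; lia.
rewrite inE => uI.
exists I, I; split=> //.
exists (sbs_rnd F t.+1 m), (sbs_sim I u P); split; first exact: sbs_sim_local.
move=> A b o v.
have [x sol] := back_sub_solution_exists A b.
have out_x r : sbs_out A b r = \col_j x j := sbs_out_solution r sol.
rewrite (prob_and_const _ _ out_x).
case: (eqVneq (\col_j x j) o) => [<- | neq_xo]; last first.
  by rewrite (@prob0 _ (fun r => sbs_out A b r == o)) ?mul0r // => r /=; rewrite out_x.
congr (_ * _).
have sol' : back_sub_solution (sim_A I A) (sim_b I u A b (\col_j x j)) x.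
  by apply: sim_back_sub_solution => // j; rewrite mxE.
have A_I i : i \in I -> sim_A I A i = A i by rewrite /sim_A => ->.
have b_I i : i \in I -> sim_b I u A b (\col_j x j) i = b i by rewrite /sim_b => ->.
apply: (prob_bij (coupled_rnd_bij u A (sim_A I A) b (sim_b I u A b (\col_j x j)) x)) => r.
rewrite /sbs_sim -(probe_agree (sbs_trace_coupled uI A_I b_I sol sol' r)) //.
exact: probed_shares_covered.
Qed.
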